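(* Let $G$ be a finite abstract simplicial complex with connection matrix $L$. Let $p(G)$ and $n(G)$ be the number of positive and negative eigenvalues of $L$ (counted with multiplicity), and let $b(G)$ and $f(G)$ be the number of even-dimensional and odd-dimensional simplices of $G$, respectively. Then $b(G)=p(G)$ and $f(G)=n(G)$. Consequently $\chi(G)=p(G)-n(G)$.
   Context: A finite abstract simplicial complex $G$ is a finite set of non-empty finite sets closed under taking non-empty subsets; its elements are simplices, and $\dim(x)=|x|-1$. The connection matrix $L$ of $G$ is the symmetric matrix indexed by simplices with $L(x,y)=1$ if $x\cap y\neq\emptyset$ and $0$ otherwise. The Euler characteristic is $\chi(G)=\sum_{x\in G}(-1)^{\dim(x)}$. *)

From mathcomp Require Import all_boot all_order all_algebra.
Set Implicit Arguments. Unset Strict Implicit. Unset Printing Implicit Defensive.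
Import Order.TTheory GRing.Theory Num.Theory.
Local Open Scope ring_scope.

Definition simplicial_complex (V : finType) (G : {set {set V}}) : Prop :=
  set0 \notin G /\
  forall x y : {set V}, x \in G -> y \subset x -> y != set0 -> y \in G.

Definition sdim (V : finType) (x : {set V}) : nat := #|x|.-1.

Definition connection_matrix (R : nzRingType) (V : finType) (G : {set {set V}})
  : 'M[R]_#|G| :=
  \matrix_(i, j) (((enum_val i :&: enum_val j) != set0)%:R : R).

Definition euler_char (V : finType) (G : {set {set V}}) : int :=
  \sum_(x in G) (-1) ^+ sdim x.

Definition b_count (V : finType) (G : {set {set V}}) : nat :=
  #|[set x in G | ~~ odd (sdim x)]|.
Definition f_count (V : finType) (G : {set {set V}}) : nat :=
  #|[set x in G | odd (sdim x)]|.

(* The eigenvalues of a square matrix over an algebraically closed field,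
   listed with (algebraic) multiplicity: the roots of its characteristic
   polynomial, char_poly A = \prod_(z <- eigenvalues A) ('X - z). *)
Definition eigenvalues (C : closedFieldType) (n : nat) (A : 'M[C]_n) : seq C :=
  sval (closed_field_poly_normal (char_poly A)).

Definition pos_eig (C : numClosedFieldType) (n : nat) (A : 'M[C]_n) : nat :=
  count (fun z => 0 < z) (eigenvalues A).
Definition neg_eig (C : numClosedFieldType) (n : nat) (A : 'M[C]_n) : nat :=
  count (fun z => z < 0) (eigenvalues A).

From mathcomp Require Import all_boot all_order all_algebra.
Set Implicit Arguments. Unset Strict Implicit. Unset Printing Implicit Defensive.
Import Order.TTheory GRing.Theory Num.Theory.
Local Open Scope ring_scope.
Local Open Scope sesquilinear_scope.

(* Let K be the 0/1 matrix K(x, y) = [y ⊆ x] on simplices and w(y) = (-1)^dim(y).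
   Then L = K diag(w) K^T: the entry L(x, y) is the sum of w over the simplices
   contained in x ∩ y, i.e. over all non-empty subsets of x ∩ y, and this is 1 or 0
   according as x ∩ y is non-empty or not, a simplex having Euler characteristic 1.
   K is invertible by Möbius inversion on the subset order, so L is congruent to
   diag(w), and Sylvester's law of inertia gives p(G) = #{w > 0} = b(G) and
   n(G) = #{w < 0} = f(G). *)

Lemma sum_sign_interval (R : pzRingType) (V : finType) (z x : {set V}) :
  \sum_(w : {set V} | (z \subset w) && (w \subset x)) (-1) ^+ #|w|
    = (z == x)%:R * (-1) ^+ #|z| :> R.
Proof.
have [<-|neq_zx] := eqVneq z x.
  by rewrite mul1r (big_pred1 z) // => w /=; rewrite eq_sym eqEsubset andbC.
rewrite mul0r; have [sub_zx|nsub_zx] := boolP (z \subset x); last first.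
  rewrite big_pred0 // => w.
  by apply: contraNF nsub_zx => /andP[/subset_trans]; apply.
have /properP[_ [a xa za]] : z \proper x by rewrite properEneq neq_zx.
(* Toggling [a] is a sign-reversing involution of the interval [z, x]. *)
pose t (w : {set V}) := if a \in w then w :\ a else a |: w.
have tK : involutive t.
  move=> w; rewrite /t /=; have [aw|naw] := boolP (a \in w).
    by rewrite setD11 setD1K.
  by rewrite setU11 (setU1K naw).
have mem_t w : (a \in t w) = (a \notin w).
  by rewrite /t; case: ifP => aw; rewrite ?setD11 ?setU11.
have interval_t w : (z \subset t w) && (t w \subset x) = (z \subset w) && (w \subset x).
  rewrite /t; case: ifP => aw.
    rewrite subsetD1 za andbT; congr (_ && _).
    apply/idP/idP => [sub_wx|/(subset_trans (subD1set w a))//].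
    by rewrite -(setD1K aw) subUset sub1set xa.
  rewrite subUset sub1set xa; congr (_ && _).
  apply/idP/idP => [/subsetP zaw|zw]; last exact: subset_trans zw (subsetU1 a w).
  apply/subsetP => y zy; move: (zaw y zy); rewrite !inE => /predU1P[ya|//].
  by move: za; rewrite -ya zy.
have sign_t w : (-1) ^+ #|t w| = - (-1) ^+ #|w| :> R.
  rewrite /t; case: ifP => aw; last by rewrite cardsU1 aw exprS mulN1r.
  by rewrite [in RHS](cardsD1 a w) aw exprS mulN1r opprK.
rewrite (bigID (fun w : {set V} => a \in w)) /=.
rewrite [X in _ + X](reindex_inj (inv_inj tK)) /=.
apply/eqP; rewrite addr_eq0 -sumrN; apply/eqP/eq_big => [w|w _].
  by rewrite interval_t mem_t negbK.
by rewrite sign_t opprK.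
Qed.

Lemma sign_sdim (R : pzRingType) (V : finType) (w : {set V}) :
  w != set0 -> (-1) ^+ sdim w = - (-1) ^+ #|w| :> R.
Proof.
by rewrite -card_gt0 /sdim => /prednK {2}<-; rewrite exprS mulN1r opprK.
Qed.

Lemma sum_sign_sdim_subsets (R : pzRingType) (V : finType) (s : {set V}) :
  \sum_(w : {set V} | (w \subset s) && (w != set0)) (-1) ^+ sdim w
    = (s != set0)%:R :> R.
Proof.
have split0 : 1 + \sum_(w : {set V} | (w \subset s) && (w != set0)) (-1) ^+ #|w|
              = (set0 == s)%:R :> R.
  have := sum_sign_interval R set0 s; rewrite cards0 expr0 mulr1 => <-.
  rewrite [RHS](bigD1 set0) ?sub0set //= cards0 expr0; congr (_ + _).
  by apply: eq_bigl => w; rewrite sub0set.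
rewrite (eq_bigr (fun w : {set V} => - (-1) ^+ #|w|)); last first.
  by move=> w /andP[_ /(sign_sdim R)].
rewrite sumrN -(addKr 1 (\sum_(w | _) _)) split0 opprD opprK eq_sym.
by case: (s == set0); rewrite ?subrr ?subr0.
Qed.

Section Inertia.
Variable C : numClosedFieldType.

Lemma congr_diag_form n (M : 'M[C]_n) (d u : 'rV[C]_n) :
  (u *m (M ^t* *m diag_mx d *m M) *m u ^t*) 0 0
    = \sum_i d 0 i * `|(u *m M ^t*) 0 i| ^+ 2.
Proof.
have -> : u *m (M ^t* *m diag_mx d *m M) *m u ^t*
          = u *m M ^t* *m diag_mx d *m (u *m M ^t*) ^t*.
  by rewrite trmx_mul map_mxM trmxCK !mulmxA.
rewrite mxE; apply: eq_bigr => i _.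
by rewrite mul_mx_diag !mxE normCK mulrAC mulrC.
Qed.

(* The rows of [invmx M] indexed by [S]: they span the row vectors [u] such that
   [(u *m M) 0 i = 0] for every [i] outside [S]. *)
Definition coord_subspace n (M : 'M[C]_n) (S : {set 'I_n}) : 'M[C]_(#|S|, n) :=
  rowsub enum_val (invmx M).

Lemma mxrank_coord_subspace n (M : 'M[C]_n) (S : {set 'I_n}) :
  M \in unitmx -> \rank (coord_subspace M S) = #|S|.
Proof.
move=> Mu; rewrite /coord_subspace rowsubE mxrankMfree ?row_free_unit ?unitmx_inv //.
apply/eqP/row_freeP; exists (rowsub enum_val (1%:M : 'M[C]_n))^T.
rewrite mul_rowsub_mx mul1mx; apply/matrixP => k l; rewrite !mxE.
by rewrite (inj_eq enum_val_inj) eq_sym.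
Qed.

Lemma coord_subspace_supp n (M : 'M[C]_n) (S : {set 'I_n}) (u : 'rV[C]_n) i :
  M \in unitmx -> (u <= coord_subspace M S)%MS -> i \notin S -> (u *m M) 0 i = 0.
Proof.
move=> Mu /submxP[x ->] iS.
rewrite -mulmxA mul_rowsub_mx mulVmx // mxE big1 // => k _.
rewrite !mxE; have [ki|] := eqVneq (enum_val k) i; last by rewrite mulr0.
by move: iS; rewrite -ki enum_valP.
Qed.

Lemma weighted_sqr_sum_gt0 n (d v : 'rV[C]_n) :
  v != 0 -> (forall i, v 0 i != 0 -> 0 < d 0 i) ->
  0 < \sum_i d 0 i * `|v 0 i| ^+ 2.
Proof.
move=> nz_v d_pos; have [i nz_vi] : exists i, v 0 i != 0.
  apply/existsP; apply: contraR nz_v; rewrite negb_exists => /forallP v0.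
  by apply/eqP/rowP => i; rewrite mxE; apply/eqP/negbNE/v0.
rewrite (bigD1 i) //= ltr_pwDl ?mulr_gt0 ?exprn_gt0 ?normr_gt0 ?d_pos //.
apply: sumr_ge0 => j _; have [->|nz_vj] := eqVneq (v 0 j) 0.
  by rewrite normr0 expr0n mulr0.
by rewrite mulr_ge0 ?exprn_ge0 // ltW ?d_pos.
Qed.

Lemma weighted_sqr_sum_le0 n (d v : 'rV[C]_n) :
  (forall i, v 0 i != 0 -> d 0 i <= 0) -> \sum_i d 0 i * `|v 0 i| ^+ 2 <= 0.
Proof.
move=> d_npos; apply: sumr_le0 => i _; have [->|nz_vi] := eqVneq (v 0 i) 0.
  by rewrite normr0 expr0n mulr0.
by rewrite mulr_le0_ge0 ?exprn_ge0 ?d_npos.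
Qed.

Lemma inertia_pos_le n (M1 M2 : 'M[C]_n) (d1 d2 : 'rV[C]_n) :
  M1 \in unitmx -> M2 \in unitmx -> d2 \is a realmx ->
  M1 ^t* *m diag_mx d1 *m M1 = M2 ^t* *m diag_mx d2 *m M2 ->
  (#|[set i | (0 < d1 0 i)%R]| <= #|[set i | (0 < d2 0 i)%R]|)%N.
Proof.
move=> M1u M2u d2r eqA.
have adj_unit (M : 'M[C]_n) : M \in unitmx -> M ^t* \in unitmx.
  by rewrite map_unitmx unitmx_tr.
set S1 := [set i | 0 < d1 0 i]; set T2 := [set i | 0 < d2 0 i].
(* The form is positive definite on W1 and nonpositive on W2. *)
pose W1 := coord_subspace (M1 ^t*) S1; pose W2 := coord_subspace (M2 ^t*) (~: T2).
have W12 : (W1 :&: W2)%MS == 0.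
  apply/rowV0P => u; rewrite sub_capmx => /andP[uW1 uW2].
  apply/eqP; apply: contraT => nz_u.
  have q_gt0 : 0 < \sum_i d1 0 i * `|(u *m M1 ^t*) 0 i| ^+ 2.
    apply: weighted_sqr_sum_gt0 => [|i].
      by rewrite mulmx_free_eq0 ?row_free_unit ?adj_unit.
    apply: contraR => d1i; rewrite (coord_subspace_supp _ uW1) ?adj_unit ?inE ?eqxx //.
  have q_le0 : \sum_i d2 0 i * `|(u *m M2 ^t*) 0 i| ^+ 2 <= 0.
    apply: weighted_sqr_sum_le0 => i; apply: contraR.
    rewrite real_leNgt ?real0 ?(mxOverP d2r) // negbK => d2i.
    by rewrite (coord_subspace_supp _ uW2) ?adj_unit ?inE ?d2i ?eqxx.
  have := congr1 (fun A => (u *m A *m u ^t*) 0 0) eqA; rewrite /= !congr_diag_form.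
  by move=> q_eq; rewrite -q_eq lt_geF in q_le0.
have := mxrank_sum_cap W1 W2; rewrite (eqP W12) mxrank0 addn0.
rewrite !mxrank_coord_subspace ?adj_unit // => rank_sum.
by rewrite -(leq_add2r #|~: T2|) cardsC card_ord -rank_sum rank_leq_col.
Qed.

Lemma inertia_pos n (M1 M2 : 'M[C]_n) (d1 d2 : 'rV[C]_n) :
  M1 \in unitmx -> M2 \in unitmx -> d1 \is a realmx -> d2 \is a realmx ->
  M1 ^t* *m diag_mx d1 *m M1 = M2 ^t* *m diag_mx d2 *m M2 ->
  #|[set i | 0 < d1 0 i]| = #|[set i | 0 < d2 0 i]|.
Proof.
move=> M1u M2u d1r d2r eqA; apply/eqP; rewrite eqn_leq.
by rewrite (inertia_pos_le M1u M2u) ?(inertia_pos_le M2u M1u).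
Qed.

Lemma inertia_neg n (M1 M2 : 'M[C]_n) (d1 d2 : 'rV[C]_n) :
  M1 \in unitmx -> M2 \in unitmx -> d1 \is a realmx -> d2 \is a realmx ->
  M1 ^t* *m diag_mx d1 *m M1 = M2 ^t* *m diag_mx d2 *m M2 ->
  #|[set i | d1 0 i < 0]| = #|[set i | d2 0 i < 0]|.
Proof.
have realN (d : 'rV[C]_n) : d \is a realmx -> - d \is a realmx.
  by move=> dr; apply/mxOverP => i j; rewrite mxE rpredN (mxOverP dr).
have neg_pos (d : 'rV[C]_n) : [set i | d 0 i < 0] = [set i | 0 < (- d) 0 i].
  by apply/setP => i; rewrite !inE mxE oppr_gt0.
move=> M1u M2u d1r d2r eqA; rewrite !neg_pos.
apply: inertia_pos M1u M2u _ _ _; rewrite ?realN //.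
by rewrite !raddfN /= !mulNmx eqA.
Qed.

End Inertia.

Lemma char_poly_conj (R : comUnitRingType) n (P A : 'M[R]_n) :
  P \in unitmx -> char_poly (invmx P *m A *m P) = char_poly A.
Proof.
move=> Pu; rewrite /char_poly /char_poly_mx.
pose f := @map_mx R {poly R} polyC n n.
have fM (X Y : 'M[R]_n) : f (X *m Y) = f X *m f Y by rewrite /f map_mxM.
have fVP : f (invmx P) *m f P = 1%:M by rewrite -fM mulVmx // /f map_mx1.
have -> : 'X%:M - f (invmx P *m A *m P) = f (invmx P) *m ('X%:M - f A) *m f P.
  by rewrite mulmxBr mulmxBl !fM mul_mx_scalar -scalemxAl fVP scalemx1.
by rewrite !det_mulmx mulrAC -det_mulmx fVP det1 mul1r.
Qed.

Lemma char_poly_eigenvalues (F : closedFieldType) n (A : 'M[F]_n) :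
  char_poly A = \prod_(z <- eigenvalues A) ('X - z%:P).
Proof.
rewrite /eigenvalues; case: closed_field_poly_normal => r /= ->.
by rewrite (monicP (char_poly_monic A)) scale1r.
Qed.

Lemma eigenvalues_conj_diag (F : closedFieldType) n (P : 'M[F]_n) (s : 'rV[F]_n) :
  P \in unitmx ->
  perm_eq (eigenvalues (invmx P *m diag_mx s *m P)) [seq s 0 i | i <- enum 'I_n].
Proof.
move=> Pu; apply: prod_XsubC_eq; rewrite -char_poly_eigenvalues char_poly_conj //.
rewrite char_poly_trig ?diag_mx_is_trig // big_map big_enum /=.
by apply: eq_bigr => i _; rewrite mxE eqxx mulr1n.
Qed.

Theorem pos_neg_eig_congr_diag (C : numClosedFieldType) n (M : 'M[C]_n) (d : 'rV[C]_n) :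
  M \in unitmx -> d \is a realmx ->
  pos_eig (M ^t* *m diag_mx d *m M) = #|[set i | 0 < d 0 i]| /\
  neg_eig (M ^t* *m diag_mx d *m M) = #|[set i | d 0 i < 0]|.
Proof.
move=> Mu d_real; set A := M ^t* *m _ *m _.
have A_herm : A \is hermsymmx.
  have d_adj : (diag_mx d) ^t* = diag_mx d by rewrite tr_diag_mx map_diag_mx realmxC.
  apply/is_hermitianmxP; rewrite expr0 scale1r /A !trmx_mul !map_mxM trmxCK d_adj.
  by rewrite mulmxA.
have /orthomx_spectralP A_spec := hermitian_normalmx A_herm.
have A_cong : A = (spectralmx A) ^t* *m diag_mx (spectral_diag A) *m spectralmx A.
  by rewrite -invmx_unitary ?spectral_unitarymx.
have count_eig (Q : pred C) :
    count Q (eigenvalues A) = #|[set i | Q (spectral_diag A 0 i)]|.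
  rewrite {1}A_spec (permP (eigenvalues_conj_diag _ (spectral_unit A))) count_map.
  by rewrite cardsE cardE size_filter -enumT.
have sp_real := hermitian_spectral_diag_real A_herm.
rewrite /pos_eig /neg_eig !count_eig.
have P_unit := spectral_unit A.
by split; [apply: (inertia_pos P_unit Mu) | apply: (inertia_neg P_unit Mu)];
  rewrite // -A_cong.
Qed.

Section FaceMatrix.
Variables (R : comUnitRingType) (V : finType) (G : {set {set V}}).
Hypothesis G_complex : simplicial_complex G.

Lemma simplex_neq0 (x : {set V}) : x \in G -> x != set0.
Proof. by case: G_complex => G0 _ xG; apply: contraNneq G0 => <-. Qed.

Lemma mem_face (x w : {set V}) : x \in G -> w \subset x -> (w \in G) = (w != set0).
Proof.
case: G_complex => _ G_faces xG wx.
by apply/idP/idP => [/simplex_neq0 //|]; apply: G_faces xG wx.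
Qed.

Local Notation simplex i := (enum_val i : {set V}).

Definition face_mx : 'M[R]_#|G| := \matrix_(i, j) (simplex j \subset simplex i)%:R.

Definition sign_dim : 'rV[R]_#|G| := \row_j (-1) ^+ sdim (simplex j).

(* Möbius inversion: the Möbius function of the subset order is
   mu(y, x) = (-1)^(|x| - |y|) for y ⊆ x. *)
Definition face_mx_inv : 'M[R]_#|G| :=
  \matrix_(i, j) ((simplex j \subset simplex i)%:R
                  * (-1) ^+ #|simplex i| * (-1) ^+ #|simplex j|).

Lemma connection_matrix_face :
  connection_matrix R G = face_mx *m diag_mx sign_dim *m face_mx^T.
Proof.
apply/matrixP => i j; rewrite !mxE -sum_sign_sdim_subsets.
pose F (w : {set V}) :=
  (w \subset simplex i)%:R * (-1) ^+ sdim w * (w \subset simplex j)%:R : R.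
rewrite (eq_bigr (F \o enum_val)) => [|k _]; last by rewrite mul_mx_diag !mxE.
rewrite -(big_enum_val F) big_mkcond [RHS]big_mkcond; apply: eq_bigr => w _ /=.
rewrite subsetI /F; have [wx|_] := boolP (w \subset simplex i); last first.
  by case: ifP; rewrite ?mul0r.
rewrite (mem_face (enum_valP i) wx).
by case: (w \subset simplex j); case: (w != set0); rewrite ?mul1r ?mulr1 ?mulr0.
Qed.

Lemma face_mx_mulV : face_mx *m face_mx_inv = 1%:M.
Proof.
apply/matrixP => i j; rewrite !mxE.
pose F (w : {set V}) := (w \subset simplex i)%:R
  * ((simplex j \subset w)%:R * (-1) ^+ #|w| * (-1) ^+ #|simplex j|) : R.
rewrite (eq_bigr (F \o enum_val)) => [|k _]; last by rewrite !mxE.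
rewrite -(big_enum_val F).
have -> : \sum_(w in G) F w
    = \sum_(w : {set V} | (simplex j \subset w) && (w \subset simplex i))
        (-1) ^+ #|w| * (-1) ^+ #|simplex j|.
  rewrite big_mkcond [RHS]big_mkcond; apply: eq_bigr => w _ /=; rewrite /F.
  have [wi|_] := boolP (w \subset simplex i); last by rewrite andbF mul0r; case: ifP.
  rewrite andbT mul1r (mem_face (enum_valP i) wi).
  have [jw|_] := boolP (simplex j \subset w); last by rewrite !mul0r; case: ifP.
  suff -> : w != set0 by rewrite mul1r.
  by apply: contraNneq (simplex_neq0 (enum_valP j)) => w0; rewrite -subset0 -w0.
rewrite -mulr_suml sum_sign_interval -mulrA -expr2 sqrr_sign mulr1.
by rewrite (inj_eq enum_val_inj) eq_sym.
Qed.

Lemma face_mx_unit : face_mx \in unitmx.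
Proof. by case/mulmx1_unit: face_mx_mulV. Qed.

End FaceMatrix.

Lemma card_enum_val (T : finType) (A : {set T}) (P : pred T) :
  #|[set i : 'I_#|A| | P (enum_val i)]| = #|[set x in A | P x]|.
Proof.
rewrite -(card_imset _ enum_val_inj); apply: eq_card => x; rewrite [in RHS]inE.
apply/imsetP/andP => [[i]|[xA Px]]; first by rewrite inE => Pi ->; rewrite enum_valP.
by exists (enum_rank_in xA x); rewrite ?inE enum_rankK_in.
Qed.

Lemma card_sign_dim_gt0 (R : numDomainType) (V : finType) (G : {set {set V}}) :
  #|[set i | 0 < sign_dim R G 0 i]| = b_count G.
Proof.
rewrite /b_count -card_enum_val; apply: eq_card => i.
by rewrite !inE mxE -signr_odd signr_gt0.
Qed.

Lemma card_sign_dim_lt0 (R : numDomainType) (V : finType) (G : {set {set V}}) :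
  #|[set i | sign_dim R G 0 i < 0]| = f_count G.
Proof.
rewrite /f_count -card_enum_val; apply: eq_card => i.
by rewrite !inE mxE -signr_odd signr_lt0.
Qed.

Lemma euler_char_counts (V : finType) (G : {set {set V}}) :
  euler_char G = (b_count G)%:Z - (f_count G)%:Z.
Proof.
rewrite /euler_char /b_count /f_count (bigID (fun x => odd (sdim x))) /= addrC.
have sum_const (P : pred {set V}) (c : int) :
    \sum_(x in G | P x) c = c *+ #|[set x in G | P x]|.
  by rewrite -sumr_const; apply: eq_bigl => x; rewrite inE.
rewrite (eq_bigr (fun=> 1)) => [|x /andP[_ /negbTE even_x]]; last first.
  by rewrite -signr_odd even_x.
rewrite [X in _ + X](eq_bigr (fun=> -1)) => [|x /andP[_ odd_x]]; last first.
  by rewrite -signr_odd odd_x.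
by rewrite !sum_const mulNrn !natz.
Qed.

Theorem theorem3 (C : numClosedFieldType) (V : finType) (G : {set {set V}}) :
  simplicial_complex G ->
  let L : 'M[C]_#|G| := connection_matrix C G in
  [/\ b_count G = pos_eig L,
      f_count G = neg_eig L &
      euler_char G = (pos_eig L)%:Z - (neg_eig L)%:Z].
Proof.
move=> G_complex L.
have L_congr : L = (face_mx C G)^T ^t* *m diag_mx (sign_dim C G) *m (face_mx C G)^T.
  rewrite /L (connection_matrix_face C G_complex) trmxK; congr (_ *m _ *m _).
  by apply/matrixP => i j; rewrite !mxE conjC_nat.
have sign_real : sign_dim C G \is a realmx.
  by apply/mxOverP => i j; rewrite mxE rpredX ?rpredN ?real1.
have face_unit : (face_mx C G)^T \in unitmx by rewrite unitmx_tr face_mx_unit.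
have [pos neg] := pos_neg_eig_congr_diag face_unit sign_real.
rewrite L_congr pos neg card_sign_dim_gt0 card_sign_dim_lt0.
by split => //; apply: euler_char_counts.
Qed.
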